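(* Let $G$ and $H$ be groups with $\mathrm{Con}(G)=\mathrm{Con}(H)$. Suppose $G$ satisfies the following ping-pong conditions: there are a set $X$ with a $G$-action, subgroups $\Gamma_1,\Gamma_2$ of $G$ with $|\Gamma_1|\ge3$, $|\Gamma_2|\ge2$, and subsets $X_1,X_2\subseteq X$ with $X_2\not\subseteq X_1$, such that $\gamma_1(X_2)\subseteq X_1$ and $\gamma_2(X_1)\subseteq X_2$ for all nonidentity $\gamma_1\in\Gamma_1$, $\gamma_2\in\Gamma_2$. Then $H$ also satisfies these conditions (for some set with an $H$-action, some subgroups of $H$ and some subsets).
   Context: For an action $G\curvearrowright X$, an ordered tuple $\mathfrak{g}=(g_1,\dots,g_n)$ of elements of $G$ and a finite partition $\mathcal{E}=\{E_1,\dots,E_m\}$ of $X$, a configuration is a tuple $C=(C_0,\dots,C_n)\in\{1,\dots,m\}^{n+1}$ such that some $x\in E_{C_0}$ satisfies $g_i\cdot x\in E_{C_i}$ for $i=1,\dots,n$; the set of these is $\mathrm{Con}(\mathfrak{g},\mathcal{E};X)$. $\mathrm{Con}(G)$ is the collection $\{\mathrm{Con}(\mathfrak{g},\mathcal{E};G)\}$ over all finite tuples $\mathfrak{g}$ in $G$ and finite partitions $\mathcal{E}$ of $G$, for the action of $G$ on itself by left multiplication. *)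

From mathcomp Require Import all_boot.
Set Implicit Arguments. Unset Strict Implicit. Unset Printing Implicit Defensive.

Record AbsGroup := {
  gcar :> Type;
  gmul : gcar -> gcar -> gcar;
  gone : gcar;
  ginv : gcar -> gcar;
  gmulA : forall x y z, gmul x (gmul y z) = gmul (gmul x y) z;
  gmul1 : forall x, gmul gone x = x;
  gmulV : forall x, gmul (ginv x) x = gone
}.

Definition is_action (G : AbsGroup) (X : Type) (act : G -> X -> X) : Prop :=
  (forall x, act (gone G) x = x) /\
  (forall g h x, act (gmul g h) x = act g (act h x)).

Definition is_subgroup (G : AbsGroup) (S : G -> Prop) : Prop :=
  S (gone G) /\ (forall x y, S x -> S y -> S (gmul x y)) /\
  (forall x, S x -> S (ginv x)).

Definition card_ge3 (G : AbsGroup) (S : G -> Prop) : Prop :=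
  exists a b c, S a /\ S b /\ S c /\ a <> b /\ a <> c /\ b <> c.
Definition card_ge2 (G : AbsGroup) (S : G -> Prop) : Prop :=
  exists a b, S a /\ S b /\ a <> b.

Definition PingPong (G : AbsGroup) : Prop :=
  exists (X : Type) (act : G -> X -> X),
    is_action act /\
    exists (Gam1 Gam2 : G -> Prop) (X1 X2 : X -> Prop),
      is_subgroup Gam1 /\ is_subgroup Gam2 /\
      card_ge3 Gam1 /\ card_ge2 Gam2 /\
      (exists x, X2 x /\ ~ X1 x) /\
      (forall g1, Gam1 g1 -> g1 <> gone G -> forall x, X2 x -> X1 (act g1 x)) /\
      (forall g2, Gam2 g2 -> g2 <> gone G -> forall x, X1 x -> X2 (act g2 x)).

(* A finite partition {E_1,...,E_m} of G, encoded by the labelling map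
   E : G -> 'I_m (E x = i iff x lies in the (i+1)-th block); the blocks are
   nonempty, i.e. E is surjective. *)
Definition is_partition (G : AbsGroup) (m : nat) (E : G -> 'I_m) : Prop :=
  forall i, exists x, E x = i.

(* Con(g, E; G) for g = (g_1,...,g_n) : 'I_n -> G (left multiplication action);
   configurations C = (C_0,...,C_n) : 'I_n.+1 -> 'I_m (labels shifted to 0..m-1). *)
Definition Con (G : AbsGroup) (n m : nat) (g : 'I_n -> G) (E : G -> 'I_m)
    (C : 'I_n.+1 -> 'I_m) : Prop :=
  exists x : G, E x = C ord0 /\ forall i : 'I_n, E (gmul (g i) x) = C (lift ord0 i).

Definition in_ConG (G : AbsGroup) (n m : nat) (S : ('I_n.+1 -> 'I_m) -> Prop) : Prop :=
  exists (g : 'I_n -> G) (E : G -> 'I_m),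
    is_partition E /\ forall C, S C <-> Con g E C.

Definition ConEq (G H : AbsGroup) : Prop :=
  forall n m (S : ('I_n.+1 -> 'I_m) -> Prop), in_ConG G S <-> in_ConG H S.

From mathcomp Require Import all_boot.
From mathcomp Require Import boolp.

Set Implicit Arguments. Unset Strict Implicit. Unset Printing Implicit Defensive.

(* Pick nontrivial a, b in Gam1 with b a <> 1 and c <> 1 in Gam2, and put u = a c b and
   v = c u c^-1.  With A+ = a c X1 and A- = (c b)^-1 X1, the ping-pong hypotheses give the
   table  u (A+ \/ X2) <= A+,  u^-1 (A- \/ X2) <= A-,  A+ \/ A- <= X1;  conjugating by c
   gives the same table for v, with B+- = c A+- and X1, X2 exchanged.  Pulled back to G
   along g |-> g x0, these are conditions on the colours of g, u g and v g under the
   colouring of G by six sets, i.e. conditions on the configurations Con((u, v), E; G) for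
   the partition E of G into colour classes.  So Con(G) = Con(H) provides u', v' and a
   colouring of H obeying the same tables, and then the cyclic groups of u' and v' play
   ping-pong on H acting on itself by left multiplication. *)

Section GroupLemmas.
Variable G : AbsGroup.
Implicit Types x y : G.

Lemma gmulVr x : gmul x (ginv x) = gone G.
Proof.
have -> : gmul x (ginv x) =
  gmul (gmul (ginv (ginv x)) (ginv x)) (gmul x (ginv x)) by rewrite gmulV gmul1.
by rewrite -gmulA (gmulA (ginv x) x) gmulV gmul1 gmulV.
Qed.

Lemma gmul1r x : gmul x (gone G) = x.
Proof. by rewrite -(gmulV x) gmulA gmulVr gmul1. Qed.

Lemma ginv_uniq x y : gmul y x = gone G -> y = ginv x.
Proof. by move=> yx1; rewrite -(gmul1r y) -(gmulVr x) gmulA yx1 gmul1. Qed.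

Lemma ginvK x : ginv (ginv x) = x.
Proof. by symmetry; apply: ginv_uniq; apply: gmulVr. Qed.

Lemma ginv1 : ginv (gone G) = gone G.
Proof. by symmetry; apply: ginv_uniq; apply: gmul1. Qed.

Lemma ginvM x y : ginv (gmul x y) = gmul (ginv y) (ginv x).
Proof.
by symmetry; apply: ginv_uniq; rewrite -gmulA (gmulA (ginv x)) gmulV gmul1 gmulV.
Qed.

Lemma ginv_neq1 x : x <> gone G -> ginv x <> gone G.
Proof. by move=> x1 /(congr1 (@ginv G)); rewrite ginvK ginv1. Qed.

Fixpoint gpow x n : G := if n is n'.+1 then gmul x (gpow x n') else gone G.

Lemma gpow1 x : gpow x 1 = x.
Proof. exact: gmul1r. Qed.

Lemma gpowC x n : gmul (gpow x n) x = gmul x (gpow x n).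
Proof.
elim: n => [|n IHn] /=; first by rewrite gmul1 gmul1r.
by rewrite -gmulA IHn.
Qed.

Lemma ginv_gpow x n : ginv (gpow x n) = gpow (ginv x) n.
Proof. by elim: n => [|n IHn] /=; rewrite ?ginv1 // ginvM IHn gpowC. Qed.

Definition gcycle x : G -> Prop :=
  fun y => exists n, y = gpow x n \/ y = gpow (ginv x) n.

Lemma gcycle_mulg x y : gcycle x y -> gcycle x (gmul x y) /\ gcycle x (gmul (ginv x) y).
Proof.
case=> [[|n] [->|->]] /=; split.
- by exists 1; left; rewrite /= gmul1r.
- by exists 1; right; rewrite /= gmul1r.
- by exists 1; left; rewrite /= gmul1r.
- by exists 1; right; rewrite /= gmul1r.
- by exists n.+2; left.
- by exists n; left; rewrite gmulA gmulV gmul1.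
- by exists n; right; rewrite gmulA gmulVr gmul1.
- by exists n.+2; right.
Qed.

Lemma gcycle_subgroup x : is_subgroup (gcycle x).
Proof.
split; first by exists 0; left.
split=> [y z [n [->|->]] xz | y [n [->|->]]]; last 2 first.
- by exists n; right; rewrite ginv_gpow.
- by exists n; left; rewrite ginv_gpow ginvK.
- elim: n => [|n IHn] /=; first by rewrite gmul1.
  by rewrite -gmulA; case: (gcycle_mulg IHn).
- elim: n => [|n IHn] /=; first by rewrite gmul1.
  by rewrite -gmulA; case: (gcycle_mulg IHn).
Qed.

Lemma card_ge3_nontrivial_pair (S : G -> Prop) :
  card_ge3 S -> exists a b, [/\ S a, S b, a <> gone G, b <> gone G & gmul b a <> gone G].
Proof.
case=> [a [b [c [Sa [Sb [Sc [ab [ac bc]]]]]]]].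
have [p [q [Sp Sq p1 q1 pq]]] :
    exists p q, [/\ S p, S q, p <> gone G, q <> gone G & p <> q].
  have [a1|a1] := pselect (a = gone G).
    by exists b, c; split=> // [b1|c1]; [apply: ab | apply: ac]; rewrite a1 ?b1 ?c1.
  have [b1|b1] := pselect (b = gone G); last by exists a, b.
  by exists a, c; split=> // c1; apply: bc; rewrite b1 c1.
have [qp1|qp1] := pselect (gmul q p = gone G); last by exists p, q.
exists p, p; split=> // pp1; apply: pq.
by rewrite (ginv_uniq pp1) (ginv_uniq qp1).
Qed.

Lemma card_ge2_nontrivial (S : G -> Prop) : card_ge2 S -> exists c, S c /\ c <> gone G.
Proof.
case=> [a [b [Sa [Sb ab]]]].
have [a1|] := pselect (a = gone G); last by exists a.
by exists b; split=> // b1; apply: ab; rewrite a1 b1.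
Qed.

Lemma card_ge3_ge2 (S : G -> Prop) : card_ge3 S -> card_ge2 S.
Proof. by case=> [a [b [c [Sa [Sb [_ [ab _]]]]]]]; exists a, b. Qed.

End GroupLemmas.

Section PingPongTables.
Variables (G : AbsGroup) (X : Type) (act : G -> X -> X).
Hypothesis act_action : is_action act.
Implicit Types (g : G) (y : X).

Lemma act1 y : act (gone G) y = y.
Proof. exact: act_action.1. Qed.

Lemma actM g h y : act (gmul g h) y = act g (act h y).
Proof. exact: act_action.2. Qed.

Lemma actK g : cancel (act g) (act (ginv g)).
Proof. by move=> y; rewrite -actM gmulV act1. Qed.

Lemma actVK g : cancel (act (ginv g)) (act g).
Proof. by move=> y; rewrite -actM gmulVr act1. Qed.

(* The second clause says that g^-1 maps minus and away into minus. *)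
Definition pingpong_table g (home away plus minus : pred X) : Prop :=
  [/\ forall y, plus y || away y -> plus (act g y),
      forall y, minus (act g y) || away (act g y) -> minus y,
      forall y, plus y -> home y & forall y, minus y -> home y].

Definition translate g (P : pred X) : pred X := fun y => P (act (ginv g) y).

Lemma pingpong_table_mono g (home home' away away' plus minus : pred X) :
    (forall y, home y -> home' y) -> (forall y, away' y -> away y) ->
  pingpong_table g home away plus minus -> pingpong_table g home' away' plus minus.
Proof.
move=> hh aa [t1 t2 t3 t4]; split=> y.
- by case/orP=> [|/aa] hy; apply: t1; rewrite hy ?orbT.
- by case/orP=> [|/aa] hy; apply: t2; rewrite hy ?orbT.
- by move/t3/hh.
- by move/t4/hh.
Qed.

Lemma pingpong_table_conj c g home away plus minus :
    pingpong_table g home away plus minus ->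
  pingpong_table (gmul c (gmul g (ginv c)))
    (translate c home) (translate c away) (translate c plus) (translate c minus).
Proof.
have actE P y : translate c P (act (gmul c (gmul g (ginv c))) y) = P (act g (act (ginv c) y)).
  by rewrite /translate !actM actK.
case=> t1 t2 t3 t4; split=> y; rewrite ?actE /translate.
all: [> apply: t1 | apply: t2 | apply: t3 | apply: t4].
Qed.

Lemma pingpong_table_witness g home away plus minus y :
    pingpong_table g home away plus minus -> away y -> ~~ home y ->
  ~~ plus y && plus (act g y).
Proof.
case=> t1 _ t3 _ ay hy; apply/andP; split; last by apply: t1; rewrite ay orbT.
by apply: contra hy; apply: t3.
Qed.

Lemma act_gpowS_stable g (P Q : pred X) :
    (forall y, P y || Q y -> P (act g y)) ->
  forall n y, P y || Q y -> P (act (gpow g n.+1) y).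
Proof.
move=> stable; elim=> [|n IHn] y PQy; first by rewrite gpow1; apply: stable.
by rewrite /= actM; apply: stable; rewrite IHn.
Qed.

Lemma pingpong_table_gcycle g home away plus minus g' y :
    pingpong_table g home away plus minus ->
  gcycle g g' -> g' <> gone G -> away y -> home (act g' y).
Proof.
case=> t1 t2 t3 t4 [[|n] [->|->]] // _ ay.
- by apply/t3/(act_gpowS_stable t1); rewrite ay orbT.
- have t2' y' : minus y' || away y' -> minus (act (ginv g) y').
    by move=> h; apply: t2; rewrite actVK.
  by apply/t4/(act_gpowS_stable t2'); rewrite ay orbT.
Qed.

Lemma pingpong_table_card g home away plus minus y :
    pingpong_table g home away plus minus -> ~~ plus y -> plus (act g y) ->
  card_ge3 (gcycle g).
Proof.
case=> t1 _ _ _ /negP Py Pgy.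
have g1 : g <> gone G by move=> g1; apply: Py; rewrite g1 act1 in Pgy.
exists (gone G), g, (ginv g); split; first by exists 0; left.
split; first by exists 1; left; rewrite gpow1.
split; first by exists 1; right; rewrite gpow1.
split; first by move/esym.
split; first by move/esym; apply: ginv_neq1.
move=> gV; apply: Py; have := t1 (act g y).
by rewrite Pgy -actM [k in gmul _ k]gV gmulVr act1; apply.
Qed.

End PingPongTables.

Lemma pingpong_table_comap (G : AbsGroup) (X : Type) (act : G -> X -> X) (x0 : X) g
    (home away plus minus : pred X) :
    is_action act -> pingpong_table act g home away plus minus ->
  pingpong_table (@gmul G) g (fun x => home (act x x0)) (fun x => away (act x x0))
    (fun x => plus (act x x0)) (fun x => minus (act x x0)).
Proof.
move=> act_action [t1 t2 t3 t4].
by split=> x; rewrite ?(actM act_action); [apply: t1|apply: t2|apply: t3|apply: t4].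
Qed.

Section PingPongTableOfPingPong.
Variables (G : AbsGroup) (X : Type) (act : G -> X -> X) (X1 X2 : pred X).
Variables (Gam1 : G -> Prop) (a b c : G).
Hypothesis act_action : is_action act.
Hypothesis Gam1_subgroup : is_subgroup Gam1.
Hypothesis ping1 : forall g, Gam1 g -> g <> gone G -> forall y, X2 y -> X1 (act g y).
Hypotheses (Gam1a : Gam1 a) (Gam1b : Gam1 b).
Hypotheses (a_neq1 : a <> gone G) (b_neq1 : b <> gone G) (ba_neq1 : gmul b a <> gone G).
Hypothesis ping_c : forall y, X1 y -> X2 (act c y).
Hypothesis ping_cV : forall y, X1 y -> X2 (act (ginv c) y).

Let actK := actK act_action.
Let actVK := actVK act_action.
Let actM := actM act_action.

Let ping1V g y : Gam1 g -> g <> gone G -> X2 y -> X1 (act (ginv g) y).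
Proof. by move=> Gg g1; apply: ping1; [apply: Gam1_subgroup.2.2 | apply: ginv_neq1]. Qed.

Let Gam1ba : Gam1 (gmul b a).
Proof. exact: Gam1_subgroup.2.1. Qed.

Lemma pingpong_table_of_pingpong :
  pingpong_table act (gmul a (gmul c b)) X1 X2
    (fun y => X1 (act (ginv c) (act (ginv a) y))) (fun y => X1 (act c (act b y))).
Proof.
have actu y : act (gmul a (gmul c b)) y = act a (act c (act b y)) by rewrite !actM.
split=> y.
- rewrite actu !actK => /orP [X1y | X2y]; last exact: ping1.
  have -> : y = act a (act c (act (ginv c) (act (ginv a) y))) by rewrite !actVK.
  by rewrite -actM; apply: ping1 => //; apply: ping_c.
- have -> : act c (act b y) = act (ginv a) (act (gmul a (gmul c b)) y) by rewrite actu actK.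
  set w := act _ y; case/orP=> [X1cbw | X2w]; last exact: ping1V.
  rewrite -[w in act _ w](actK b) -[act b w](actK c) -actM -ginvM.
  by apply: ping1V => //; apply: ping_cV.
- move=> X1y; rewrite -[y](actVK a) -[act (ginv a) y](actVK c).
  by apply: ping1 => //; apply: ping_c.
- move=> X1cby; rewrite -[y](actK b) -[act b y](actK c).
  by apply: ping1V => //; apply: ping_cV.
Qed.

End PingPongTableOfPingPong.

Lemma partition_of_colouring (K : AbsGroup) (T : finType) (f : K -> T) :
  exists m (E : K -> 'I_m) (dec : 'I_m -> T), is_partition E /\ forall x, dec (E x) = f x.
Proof.
pose r := [seq t <- enum T | `[< exists x, f x = t >]].
have r_f x : f x \in r by rewrite mem_filter mem_enum andbT; apply/asboolP; exists x.
exists (size r), (fun x => Ordinal (etrans (index_mem _ _) (r_f x))), (nth (f (gone K)) r).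
split=> [i | x /=]; last exact: nth_index.
have : nth (f (gone K)) r i \in r by apply: mem_nth.
rewrite mem_filter => /andP [/asboolP [x fx] _]; exists x; apply: val_inj => /=.
by rewrite fx index_uniq // filter_uniq // enum_uniq.
Qed.

Lemma Con_sub_view (K K' : AbsGroup) n m (g : 'I_n -> K) (E : K -> 'I_m)
    (g' : 'I_n -> K') (E' : K' -> 'I_m) :
    (forall C, Con g' E' C -> Con g E C) ->
  forall x', exists x, E x = E' x' /\ forall i, E (gmul (g i) x) = E' (gmul (g' i) x').
Proof.
move=> subCon x'.
pose C k := if unlift ord0 k is Some i then E' (gmul (g' i) x') else E' x'.
have [|x [Ex Egx]] := subCon C.
  by exists x'; split=> [|i]; rewrite /C ?unlift_none ?liftK.
by exists x; split=> [|i]; rewrite ?Ex ?Egx /C ?unlift_none ?liftK.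
Qed.

Definition same_colours (K K' : AbsGroup) n k (g : 'I_n -> K) (S : 'I_k -> pred K)
    (g' : 'I_n -> K') (S' : 'I_k -> pred K') (x : K) (x' : K') : Prop :=
  (forall i, S i x = S' i x') /\ (forall i j, S i (gmul (g j) x) = S' i (gmul (g' j) x')).

Lemma ConEq_colours (G H : AbsGroup) n k (g : 'I_n -> G) (S : 'I_k -> pred G) :
    ConEq G H ->
  exists (h : 'I_n -> H) (S' : 'I_k -> pred H),
    (forall x', exists x, same_colours g S h S' x x') /\
    (forall x, exists x', same_colours h S' g S x' x).
Proof.
move=> ConGH.
have [m [E [dec [partE decE]]]] := partition_of_colouring (fun x => [ffun i => S i x]).
have : in_ConG G (Con g E) by exists g, E.
case/ConGH=> h [E' [_ ConE]].
exists h, (fun i x' => dec (E' x') i); split=> [x' | x].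
- have [x [Ex Egx]] := Con_sub_view (fun C => (ConE C).2) x'.
  by exists x; split=> [i | i j] /=; rewrite -?Ex -?Egx decE ffunE.
- have [x' [Ex Egx]] := Con_sub_view (fun C => (ConE C).1) x.
  by exists x'; split=> [i | i j] /=; rewrite ?Ex ?Egx decE ffunE.
Qed.

Lemma pingpong_table_transfer (K K' : AbsGroup) k (S : 'I_k -> pred K) (S' : 'I_k -> pred K')
    (g : K) (g' : K') (ih ia ip im : 'I_k) :
    (forall x', exists x, (forall i, S i x = S' i x') /\
                          (forall i, S i (gmul g x) = S' i (gmul g' x'))) ->
    pingpong_table (@gmul K) g (S ih) (S ia) (S ip) (S im) ->
  pingpong_table (@gmul K') g' (S' ih) (S' ia) (S' ip) (S' im).
Proof.
move=> view [t1 t2 t3 t4]; split=> x'; have [x [Sx Sgx]] := view x'; rewrite -!Sx -?Sgx.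
all: [> exact: t1 | exact: t2 | exact: t3 | exact: t4].
Qed.

Definition local_pingpong (K : AbsGroup) : Prop :=
  exists (u v : K) (X1 X2 Ap Am Bp Bm : pred K),
    [/\ pingpong_table (@gmul K) u X1 X2 Ap Am, pingpong_table (@gmul K) v X2 X1 Bp Bm,
        exists x, X2 x && ~~ X1 x & exists x, ~~ Bp x && Bp (gmul v x)].

Lemma local_pingpong_transfer (G H : AbsGroup) :
  ConEq G H -> local_pingpong G -> local_pingpong H.
Proof.
move=> ConGH [u [v [X1 [X2 [Ap [Am [Bp [Bm [tu tv [x1 w1] [x2 w2]]]]]]]]]].
pose S (i : 'I_6) := nth (fun _ => false) [:: X1; X2; Ap; Am; Bp; Bm] i.
have [h [S' [toG toH]]] := ConEq_colours (fun j : 'I_2 => nth u [:: u; v] j) S ConGH.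
have view (j : 'I_2) x' : exists x, (forall i, S i x = S' i x') /\
    forall i, S i (gmul (nth u [:: u; v] j) x) = S' i (gmul (h j) x').
  by have [x [Sx Sgx]] := toG x'; exists x; split=> // i; apply: Sgx.
have [x1' [Sx1 _]] := toH x1; have [x2' [Sx2 Sgx2]] := toH x2.
exists (h ord0), (h ord_max), (S' (@Ordinal 6 0 isT)), (S' (@Ordinal 6 1 isT)),
  (S' (@Ordinal 6 2 isT)), (S' (@Ordinal 6 3 isT)), (S' (@Ordinal 6 4 isT)),
  (S' (@Ordinal 6 5 isT)).
split.
- by apply: (pingpong_table_transfer (view ord0)); exact: tu.
- by apply: (pingpong_table_transfer (view ord_max)); exact: tv.
- by exists x1'; rewrite !Sx1.
- by exists x2'; rewrite Sx2 Sgx2.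
Qed.

Lemma gmul_action (K : AbsGroup) : is_action (@gmul K).
Proof. by split=> [x|g h x]; rewrite ?gmul1 ?gmulA. Qed.

Lemma pingpong_of_local (K : AbsGroup) : local_pingpong K -> PingPong K.
Proof.
case=> u [v [X1 [X2 [Ap [Am [Bp [Bm [tu tv [x0 /andP [X2x0 X1x0]] [y0 /andP [Bpy0 Bpvy0]]]]]]]]]].
have /andP [Apx0 Apux0] := pingpong_table_witness tu X2x0 X1x0.
exists K, (@gmul K); split; first exact: gmul_action.
exists (gcycle u), (gcycle v), (fun x => X1 x), (fun x => X2 x).
split; first exact: gcycle_subgroup.
split; first exact: gcycle_subgroup.
split; first exact: (pingpong_table_card (gmul_action K) tu Apx0 Apux0).
split; first exact: card_ge3_ge2 (pingpong_table_card (gmul_action K) tv Bpy0 Bpvy0).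
split; first by exists x0; split=> //; apply/negP.
split=> g Gg g1 x ax.
- exact: (pingpong_table_gcycle (gmul_action K) tu Gg g1 ax).
- exact: (pingpong_table_gcycle (gmul_action K) tv Gg g1 ax).
Qed.

Lemma local_of_pingpong (G : AbsGroup) : PingPong G -> local_pingpong G.
Proof.
case=> X [act [act_action [Gam1 [Gam2 [X1 [X2 [Gam1_sub [Gam2_sub [card1 [card2
  [[x0 [X2x0 X1x0]] [ping1 ping2]]]]]]]]]]]].
have [a [b [Gam1a Gam1b a1 b1 ba1]]] := card_ge3_nontrivial_pair card1.
have [c [Gam2c c1]] := card_ge2_nontrivial card2.
pose Y1 y := `[< X1 y >]; pose Y2 y := `[< X2 y >].
have ping1b g : Gam1 g -> g <> gone G -> forall y, Y2 y -> Y1 (act g y).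
  by move=> Gg g1 y /asboolP X2y; apply/asboolP; apply: ping1.
have ping2b g : Gam2 g -> g <> gone G -> forall y, Y1 y -> Y2 (act g y).
  by move=> Gg g1 y /asboolP X1y; apply/asboolP; apply: ping2.
pose u := gmul a (gmul c b); pose v := gmul c (gmul u (ginv c)).
pose Ap y := Y1 (act (ginv c) (act (ginv a) y)); pose Am y := Y1 (act c (act b y)).
have tu : pingpong_table act u Y1 Y2 Ap Am.
  exact: pingpong_table_of_pingpong act_action Gam1_sub ping1b Gam1a Gam1b a1 b1 ba1
    (ping2b _ Gam2c c1) (ping2b _ (Gam2_sub.2.2 _ Gam2c) (ginv_neq1 c1)).
have tv := pingpong_table_conj act_action c tu.
pose pull (P : pred X) x := P (act x x0).
exists u, v, (pull Y1), (pull Y2), (pull Ap), (pull Am),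
  (pull (translate act c Ap)), (pull (translate act c Am)).
split.
- exact: (pingpong_table_comap _ act_action tu).
- apply: (pingpong_table_comap _ act_action (pingpong_table_mono _ _ tv)) => y.
  + by rewrite /translate -{2}(actVK act_action c y); apply: ping2b.
  + by apply: ping2b => //; [apply: Gam2_sub.2.2 | apply: ginv_neq1].
- by exists (gone G); rewrite /pull act1 //; apply/andP; split; [apply/asboolP | apply/asboolPn].
- exists c; rewrite /pull actM //; apply: (pingpong_table_witness tv).
  + by rewrite /translate actK //; apply/asboolP.
  + by rewrite /translate actK //; apply/asboolPn.
Qed.

Theorem mainTheorem10 (G1 G2 : AbsGroup) :
  ConEq G1 G2 -> PingPong G1 -> PingPong G2.
Proof.
move=> ConG12 /local_of_pingpong localG1.
exact/pingpong_of_local/(local_pingpong_transfer ConG12).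
Qed.
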